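(* Let $k\ge 2$ be an integer. Let $E_{k+3}(C_3)$ be the Schwarzenberger bundle on $\mathbb{P}^3=\mathbb{P}(S_3)$ defined by the exact sequence $$0\to S_k\otimes\mathcal{O}_{\mathbb{P}(S_3)}(-1)\xrightarrow{M} S_{k+3}\otimes\mathcal{O}_{\mathbb{P}(S_3)}\to E_{k+3}(C_3)\to0,$$ where ${}^tM$ is the $(k+1)\times(k+4)$ matrix whose $i$-th row ($i=0,\dots,k$) has entries $X_0,X_1,X_2,X_3$ in columns $i,i+1,i+2,i+3$ and zeros elsewhere. Let $H\subset\mathbb{P}^3$ be a general plane, let $E_{k+3}(\overline{C_3}):=E_{k+3}(C_3)|_H$ (a Steiner bundle of rank 3 on $H$), and let $\overline{C_3}$ be the image of the twisted cubic $C_3\subset\mathbb{P}^{3\vee}$ under the linear projection from the point $H^\vee$, viewed as a (singular) cubic curve in the dual plane of $H$: it is the set of lines $H'\cap H\subset H$ with $H'^\vee\in C_3$. Then the set of unstable lines of $E_{k+3}(\overline{C_3})$ in $H$ is exactly $\overline{C_3}$, i.e. a line $l\subset H$ satisfies $H^0((E_{k+3}(\overline{C_3})|_l)^\vee)\neq0$ if and only if $l=H'\cap H$ for some plane $H'$ with $H'^\vee\in C_3$.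
   Context: Work over $\mathbb{C}$. $U$ is a 2-dimensional vector space, $S_i=\mathrm{Sym}^iU$, $(X_0,\dots,X_3)$ are coordinates on $\mathbb{P}^3=\mathbb{P}(S_3)$, and $C_3\subset\mathbb{P}^{3\vee}=\mathbb{P}(S_3^\vee)$ is the twisted cubic, image of $\mathbb{P}(S_1^\vee)$ by the Veronese embedding. For a plane $H'\subset\mathbb{P}^3$, $H'^\vee\in\mathbb{P}^{3\vee}$ is its dual point. For general $H$, $H^\vee\notin C_3$. *)

From HB Require Import structures.
From mathcomp Require Import all_boot all_order all_algebra.
Set Implicit Arguments. Unset Strict Implicit. Unset Printing Implicit Defensive.
Import Order.TTheory GRing.Theory Num.Theory.
Local Open Scope ring_scope.

Section Defs.
Variable F : fieldType.

(* A point of P^3 = P(S_3) is a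
   nonzero row vector x; the plane with dual point h is {x | <h,x> = 0}. *)
Definition pair4 (h x : 'rV[F]_4) : F := \sum_(i < 4) h 0 i * x 0 i.

(* Point (s^3 : s^2 t : s t^2 : t^3) of the twisted cubic C_3 in P^{3v}
   (image of (s:t) in P(S_1^v) by the Veronese map, in the coordinates in which
   the matrix tM below has entries X_0..X_3 with no binomial coefficients). *)
Definition cubic_pt (s t : F) : 'rV[F]_4 := \row_(j < 4) (s ^+ (3 - j) * t ^+ j).

Definition tM (k : nat) (x : 'rV[F]_4) : 'M[F]_(k.+1, k + 4) :=
  \matrix_(i < k.+1, j < k + 4)
    (if (i <= j)%N && (j - i < 4)%N then x 0 (inord (j - i)) else 0).

(* Let l = P(span(a,b)) be a line of P^3 (a, b independent).  Restricting the
   defining sequence of E_{k+3} to l and dualizing gives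
   0 -> (E|_l)^v -> S_{k+3}^v (x) O_l -> S_k^v (x) O_l(1) -> 0, so
   H^0((E|_l)^v) = { v in S_{k+3}^v | tM(x) v = 0 for all x in l }
                 = { v | tM(a) v = 0 and tM(b) v = 0 }.
   A line is unstable iff this space is nonzero. *)
Definition unstable_line (k : nat) (a b : 'rV[F]_4) : Prop :=
  exists v : 'cV[F]_(k + 4), v != 0 /\ tM k a *m v = 0 /\ tM k b *m v = 0.

End Defs.

(* Polynomials in 4 variables (coordinates of the dual point H^v), encoded as
   iterated univariate polynomials, and their evaluation. *)
Definition mpoly4 (F : fieldType) := {poly {poly {poly {poly F}}}}.

Definition eval4 (F : fieldType) (P : mpoly4 F) (h : 'rV[F]_4) : F :=
  (((P.[(h 0 (inord 3))%:P%:P%:P]).[(h 0 (inord 2))%:P%:P]).[(h 0 (inord 1))%:P]).[h 0 (inord 0)].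

From mathcomp Require Import all_boot all_order all_algebra.
From mathcomp Require Import zify ring.

(* A line l = P(<a, b>) is unstable iff some v <> 0 satisfies tM(a) v = tM(b) v = 0.
   Reading v as a linear form on polynomials of degree <= k + 3, these equations say
   that v kills every multiple q A, q B (deg q <= k) of the binary cubics A, B attached
   to a and b.  If A and B had no common root, a degree-bounded Bezout identity (valid
   for k >= 2) would write every polynomial of degree <= k + 3 in this way, forcing
   v = 0; so A and B share a root, i.e. l lies in a plane H' with H'^v on C_3.
   Conversely, the point of the rational normal curve of degree k + 3 over a point of
   C_3 is killed by tM(x) for every x of the corresponding plane H'.  When H is off
   the quadric h0 h2 = h1^2 containing C_3, H and H' are distinct, so H /\ H' is
   exactly l. *)

Set Implicit Arguments.
Unset Strict Implicit.
Unset Printing Implicit Defensive.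
Import GRing.Theory.
Local Open Scope ring_scope.

Section PolyCombination.
Context {F : fieldType}.
Implicit Types A B p r u v : {poly F}.

Lemma coprimep_comb_small A B r d :
    coprimep A B -> size A = d.+1 -> (size B <= d.+1)%N -> (size r <= d)%N ->
  exists u v, [/\ (size u <= d)%N, (size v <= d)%N & r = u * A + v * B].
Proof.
move=> /Bezout_eq1_coprimepP [[u1 u2] /= Bezout] sA sB sr.
have A0 : A != 0 by rewrite -size_poly_eq0 sA.
pose v := (r * u2) %% A; pose u := r * u1 + (r * u2) %/ A * B.
have sv : (size v <= d)%N by rewrite -ltnS -sA ltn_modp.
have r_uv : r = u * A + v * B.
  rewrite /u /v; move: (divp_eq (r * u2) A).
  set w := r * u2; set w1 := w %/ A; set w2 := w %% A => w_div.
  by rewrite -[LHS]mulr1 -Bezout mulrDr !mulrA -/w w_div; ring.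
exists u, v; split=> //.
have [->|u0] := eqVneq u 0; first by rewrite size_poly0.
have uA : u * A = r - v * B by rewrite [in RHS]r_uv addrK.
have : (size (u * A)%R <= d + d)%N.
  rewrite uA (leq_trans (size_polyD _ _)) // size_polyN geq_max.
  rewrite (leq_trans sr) ?leq_addr //=.
  apply: leq_trans (size_polyMleq v B) _.
  by rewrite -subn1 leq_subLR add1n -addnS leq_add.
by rewrite size_mul // sA addnS /= leq_add2r.
Qed.

Lemma coprimep_comb A B p n d :
    coprimep A B -> size A = d.+1 -> (size B <= d.+1)%N -> (d <= n.+1)%N ->
    (size p <= n + d.+1)%N ->
  exists u v, [/\ (size u <= n.+1)%N, (size v <= n.+1)%N & p = u * A + v * B].
Proof.
move=> cAB sA sB dn sp.
have A0 : A != 0 by rewrite -size_poly_eq0 sA.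
have [|u [v [su sv mod_uv]]] := coprimep_comb_small (r := p %% A) cAB sA sB.
  by rewrite -ltnS -sA ltn_modp.
exists (p %/ A + u), v; split; last by rewrite {1}(divp_eq p A) mod_uv; ring.
- apply: leq_trans (size_polyD _ _) _; rewrite geq_max (leq_trans su) //.
  by rewrite andbT size_divp // sA leq_subLR addnC addSn -addnS.
- exact: leq_trans sv dn.
Qed.
End PolyCombination.

Section DualPolynomial.
Context {F : fieldType}.

Definition cubic_poly (x : 'rV[F]_4) : {poly F} := \poly_(j < 4) x 0 (inord j).

Lemma pair4_cubic_pt1 (mu : F) x : pair4 (cubic_pt 1 mu) x = (cubic_poly x).[mu].
Proof.
rewrite /pair4 horner_poly; apply: eq_bigr => i _.
by rewrite !mxE expr1n mul1r inord_val mulrC.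
Qed.

Lemma poly_rV_mulmx_eq0 n (v : 'cV[F]_n) :
  (forall p : {poly F}, (size p <= n)%N -> poly_rV p *m v = 0) -> v = 0.
Proof.
move=> pv0; rewrite -[v]mul1mx; apply/row_matrixP => i.
by rewrite row_mul row0 -[row i 1%:M]rVpolyK pv0 // size_poly.
Qed.

Lemma tM_mulmxE k x (v : 'cV[F]_(k + 4)) (i : 'I_k.+1) :
  (tM k x *m v) i 0 = (poly_rV ('X^i * cubic_poly x) *m v) 0 0.
Proof.
rewrite !mxE; apply: eq_bigr => j _.
rewrite !mxE coefXnM /cubic_poly coef_poly ltnNge.
by rewrite [(j < i)%N]ltnNge; case: (i <= j)%N.
Qed.

Lemma tM_ker_poly_rV k x (v : 'cV[F]_(k + 4)) (q : {poly F}) :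
  tM k x *m v = 0 -> (size q <= k.+1)%N -> poly_rV (q * cubic_poly x) *m v = 0.
Proof.
move=> xv0 sq; have -> : q = \sum_(i < k.+1) q`_i *: 'X^i.
  rewrite -poly_def; apply/polyP => i; rewrite coef_poly.
  by case: ltnP => // ki; rewrite nth_default ?(leq_trans sq).
rewrite mulr_suml linear_sum mulmx_suml; apply: big1 => i _.
rewrite -scalerAl linearZ -scalemxAl [X in _ *: X]mx11_scalar -tM_mulmxE xv0.
by rewrite mxE raddf0 scaler0.
Qed.

End DualPolynomial.

Section Pencil.
Context {F : fieldType}.

Lemma pair4E (h x : 'rV[F]_4) : pair4 h x = (x *m h^T) 0 0.
Proof. by rewrite mxE; apply: eq_bigr => i _; rewrite !mxE mulrC. Qed.

Lemma pair4_lin (h a b : 'rV[F]_4) (la mu : F) :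
  pair4 h (la *: a + mu *: b) = la * pair4 h a + mu * pair4 h b.
Proof. by rewrite !pair4E mulmxDl -!scalemxAl !mxE. Qed.

Lemma mulmx_tr_col_mx_eq0 (h c x : 'rV[F]_4) :
  x *m (col_mx h c)^T = 0 <-> pair4 h x = 0 /\ pair4 c x = 0.
Proof.
have mx11_eq0 (M : 'M[F]_1) : (M == 0) = (M 0 0 == 0).
  by rewrite [M in LHS]mx11_scalar -scalemx1 scaler_eq0 oner_eq0 orbF.
rewrite !pair4E tr_col_mx mul_mx_row; split.
  by move/eqP; rewrite row_mx_eq0 !mx11_eq0 => /andP [/eqP -> /eqP ->].
by move=> [/eqP hx /eqP cx]; apply/eqP; rewrite row_mx_eq0 !mx11_eq0 hx cx.
Qed.

Lemma sub_kermx_tr_rank m n r (N : 'M[F]_(m, n)) (A : 'M[F]_(r, n)) (x : 'rV[F]_n) :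
  (\rank A + \rank N)%N = n -> A *m N^T = 0 -> x *m N^T = 0 -> (x <= A)%MS.
Proof.
move=> rankAN /sub_kermxP sAK /sub_kermxP sxK.
have := mxrank_leqif_sup sAK; rewrite mxrank_ker mxrank_tr.
have -> : (n - \rank N)%N = \rank A by lia.
by move/leqif_refl; apply: submx_trans sxK.
Qed.

Lemma rank_col_mx_rV n (h c : 'rV[F]_n) :
  h != 0 -> ~~ (c <= h)%MS -> \rank (col_mx h c) = 2%N.
Proof.
move=> h0 chN; apply/eqP; rewrite eqn_leq rank_leq_row /=.
have := @rank_ltmx _ _ _ _ h (col_mx h c); rewrite rank_rV h0; apply.
by rewrite ltmxE col_mx_sub submx_refl chN -addsmxE addsmxSl.
Qed.

Lemma sub_col_mx_rV2P n (a b x : 'rV[F]_n) :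
  (x <= col_mx a b)%MS -> exists la mu : F, x = la *: a + mu *: b.
Proof.
move=> /submxP [D ->]; exists (lsubmx D 0 0), (rsubmx D 0 0).
rewrite -{1}[D]hsubmxK mul_row_col.
by rewrite {1}[lsubmx D]mx11_scalar {1}[rsubmx D]mx11_scalar !mul_scalar_mx.
Qed.

Lemma pencil_span (h c a b x : 'rV[F]_4) :
  \rank (col_mx h c) = 2%N -> \rank (col_mx a b) = 2%N ->
  pair4 h a = 0 -> pair4 h b = 0 -> pair4 c a = 0 -> pair4 c b = 0 ->
  pair4 h x = 0 -> pair4 c x = 0 -> exists la mu : F, x = la *: a + mu *: b.
Proof.
move=> rhc rab ha hb ca cb hx cx; apply: sub_col_mx_rV2P.
apply: (@sub_kermx_tr_rank _ _ _ (col_mx h c)); first by rewrite rab rhc.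
  by rewrite mul_col_mx !(proj2 (mulmx_tr_col_mx_eq0 _ _ _)) ?col_mx0.
exact/mulmx_tr_col_mx_eq0.
Qed.

End Pencil.

Section TwistedCubic.
Context {F : fieldType}.

Lemma pair4_cubic_pt01 (x : 'rV[F]_4) : pair4 (cubic_pt 0 1) x = x 0 (inord 3).
Proof.
have -> : inord 3 = ord_max :> 'I_4 by apply: val_inj; rewrite /= inordK.
rewrite /pair4 !big_ord_recr big_ord0 /= !mxE /= !expr0n !expr1n /=; ring.
Qed.

Lemma cubic_pt_neq0 (s t : F) : (s, t) != (0, 0) -> cubic_pt s t != 0.
Proof.
apply: contraNneq => st0; have /eqP := congr1 (fun c : 'rV[F]_4 => c 0 0) st0.
have /eqP := congr1 (fun c : 'rV[F]_4 => c 0 ord_max) st0.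
rewrite !mxE /= expr0 mulr1 mul1r !expf_eq0 /= => /eqP -> /eqP -> //.
Qed.

Definition cubic_quadric : mpoly4 F :=
  ('X : {poly F})%:P%:P%:P * ('X : {poly {poly {poly F}}})%:P
  - (('X : {poly {poly F}})%:P%:P) ^+ 2.

Lemma eval4_cubic_quadric (h : 'rV[F]_4) :
  eval4 cubic_quadric h = h 0 (inord 0) * h 0 (inord 2) - h 0 (inord 1) ^+ 2.
Proof. by rewrite /eval4 /cubic_quadric !hornerE. Qed.

Lemma cubic_quadric_neq0 : cubic_quadric != 0.
Proof.
apply: contra_neq (@oner_neq0 F) => Q0.
have := eval4_cubic_quadric (\row_(j < 4) ((j : nat) != 1%N)%:R).
by rewrite Q0 /eval4 !horner0 !mxE !inordK //= expr0n /= subr0 mulr1.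
Qed.

Lemma eval4_cubic_quadric_pt (s t : F) : eval4 cubic_quadric (cubic_pt s t) = 0.
Proof. by rewrite eval4_cubic_quadric !mxE !inordK //=; ring. Qed.

Lemma eval4_cubic_quadricZ (l : F) (h : 'rV[F]_4) :
  eval4 cubic_quadric (l *: h) = l ^+ 2 * eval4 cubic_quadric h.
Proof. by rewrite !eval4_cubic_quadric !mxE; ring. Qed.

Lemma rank_off_cubic_quadric (h c : 'rV[F]_4) :
  eval4 cubic_quadric h != 0 -> c != 0 -> eval4 cubic_quadric c = 0 ->
  \rank (col_mx h c) = 2%N.
Proof.
move=> hQ c0 cQ; apply: rank_col_mx_rV.
  by apply: contraNneq hQ => ->; rewrite eval4_cubic_quadric !mxE mul0r expr0n subr0.
apply/negP => /sub_rVP [l cE]; move: cQ c0.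
rewrite cE eval4_cubic_quadricZ => /eqP; rewrite mulf_eq0 (negbTE hQ) orbF.
by rewrite expf_eq0 /= => /eqP ->; rewrite scale0r eqxx.
Qed.

Definition veronese_col k (s t : F) : 'cV[F]_(k + 4) :=
  \col_(m < k + 4) (s ^+ (k + 3 - m) * t ^+ m).

Lemma tM_mulmx_veronese k (x : 'rV[F]_4) (s t : F) (i : 'I_k.+1) :
  (tM k x *m veronese_col k s t) i 0 = s ^+ (k - i) * t ^+ i * pair4 (cubic_pt s t) x.
Proof.
pose G j := (if (i <= j)%N && (j - i < 4)%N then x 0 (inord (j - i)) else 0)
   * (s ^+ (k + 3 - j) * t ^+ j).
rewrite mxE (eq_bigr (G \o val)) => [|j _]; last by rewrite !mxE.
have ik : (i <= k)%N by rewrite -ltnS.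
rewrite -(big_mkord xpredT G) (big_cat_nat (n := i)) /=; [|lia|lia].
rewrite big_nat_cond big1 ?add0r; last first.
  by move=> j /andP [/andP [_ ji] _]; rewrite /G leqNgt ji mul0r.
rewrite (big_cat_nat (n := i + 4)) /=; [|lia|lia].
rewrite [X in _ + X]big_nat_cond [X in _ + X]big1 ?addr0; last first.
  move=> j /andP [/andP [ij _] _].
  by rewrite /G [(j - i < 4)%N]ltnNge (_ : (4 <= j - i)%N) ?andbF ?mul0r //; lia.
rewrite -{1}(add0n i) big_addn addKn big_mkord /pair4 mulr_sumr.
apply: eq_bigr => l _; rewrite /G leq_addl addnK ltn_ord inord_val !mxE.
have -> : (k + 3 - (l + i) = (k - i) + (3 - l))%N by have := ltn_ord l; lia.
by rewrite !exprD /=; ring.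
Qed.

Lemma tM_veronese_ker k (x : 'rV[F]_4) (s t : F) :
  pair4 (cubic_pt s t) x = 0 -> tM k x *m veronese_col k s t = 0.
Proof.
by move=> cx; apply/matrixP => i j; rewrite ord1 tM_mulmx_veronese cx mulr0 mxE.
Qed.

Lemma veronese_col_neq0 k (s t : F) : (s, t) != (0, 0) -> veronese_col k s t != 0.
Proof.
apply: contraNneq => v0.
have lt0 : (0 < k + 4)%N by rewrite addn4.
have lt_last : (k + 3 < k + 4)%N by rewrite ltn_add2l.
have /eqP := congr1 (fun v : 'cV[F]_(k + 4) => v (Ordinal lt0) 0) v0.
have /eqP := congr1 (fun v : 'cV[F]_(k + 4) => v (Ordinal lt_last) 0) v0.
rewrite !mxE /= subnn expr0 mulr1 mul1r !expf_eq0 addn3 /= => /eqP -> /eqP -> //.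
Qed.

End TwistedCubic.

Section Unstable.
Context {F : closedFieldType}.

Lemma not_coprimep_common_root (A B : {poly F}) :
  ~~ coprimep A B -> exists x, root A x && root B x.
Proof. by move=> /closed_rootP [x]; rewrite root_gcd; exists x. Qed.

Lemma tM_ker_not_coprimep k (a b : 'rV[F]_4) (v : 'cV[F]_(k + 4)) :
    (2 <= k)%N -> a 0 (inord 3) != 0 -> v != 0 ->
    tM k a *m v = 0 -> tM k b *m v = 0 ->
  ~~ coprimep (cubic_poly a) (cubic_poly b).
Proof.
move=> k2 a3 v0 av0 bv0; apply: contra v0 => cop.
apply/eqP/poly_rV_mulmx_eq0 => p sp.
have [||||u [w [su sw ->]]] := coprimep_comb (p := p) (n := k) (d := 3) cop.
- exact: size_poly_eq.
- exact: size_poly.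
- by rewrite ltnS.
- by [].
by rewrite linearD mulmxDl !tM_ker_poly_rV ?addr0.
Qed.

Lemma unstable_line_cubic_pt k (a b : 'rV[F]_4) : (2 <= k)%N -> unstable_line k a b ->
  exists s t : F, [/\ (s, t) != (0, 0),
    pair4 (cubic_pt s t) a = 0 & pair4 (cubic_pt s t) b = 0].
Proof.
move=> k2 [v [v0 [av0 bv0]]].
have root_pt (c d : 'rV[F]_4) : c 0 (inord 3) != 0 ->
    tM k c *m v = 0 -> tM k d *m v = 0 ->
    exists mu, pair4 (cubic_pt 1 mu) c = 0 /\ pair4 (cubic_pt 1 mu) d = 0.
  move=> c3 cv0 dv0.
  have [mu /andP [cmu dmu]] := not_coprimep_common_root (tM_ker_not_coprimep k2 c3 v0 cv0 dv0).
  by exists mu; rewrite !pair4_cubic_pt1; split; apply/eqP.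
have pt1 (mu : F) : (1, mu) != (0, 0) :> F * F by rewrite xpair_eqE oner_eq0.
have [a3|a3] := eqVneq (a 0 (inord 3)) 0; last first.
  by have [mu [ca cb]] := root_pt a b a3 av0 bv0; exists 1, mu; split.
have [b3|b3] := eqVneq (b 0 (inord 3)) 0; last first.
  by have [mu [cb ca]] := root_pt b a b3 bv0 av0; exists 1, mu; split.
exists 0, 1; rewrite !pair4_cubic_pt01 a3 b3; split=> //.
by rewrite xpair_eqE oner_eq0 andbF.
Qed.

End Unstable.

Theorem proposition5p7 (F : closedFieldType) (F_char0 : [pchar F] =i pred0)
    (k : nat) (hk : (2 <= k)%N) :
  exists P : mpoly4 F, P != 0 /\
  forall h : 'rV[F]_4, h != 0 -> eval4 P h != 0 ->
  forall a b : 'rV[F]_4,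
    \rank (col_mx a b) = 2%N -> pair4 h a = 0 -> pair4 h b = 0 ->
    (unstable_line k a b <->
     exists s t : F, (s, t) != (0, 0) /\
       (forall x : 'rV[F]_4,
          (pair4 h x = 0 /\ pair4 (cubic_pt s t) x = 0) <->
          exists la mu : F, x = la *: a + mu *: b)).
Proof.
exists cubic_quadric; split=> [|h _ hQ a b rab ha hb]; first exact: cubic_quadric_neq0.
split=> [/(unstable_line_cubic_pt hk) [s [t [st ca cb]]] | [s [t [st plane]]]].
  have rhc := rank_off_cubic_quadric hQ (cubic_pt_neq0 st) (eval4_cubic_quadric_pt s t).
  exists s, t; split=> // x; split=> [[hx cx] | [la [mu ->]]].
    exact: pencil_span rhc rab ha hb ca cb hx cx.
  by rewrite !pair4_lin ha hb ca cb !mulr0 addr0.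
have on_cubic_plane y : (exists la mu : F, y = la *: a + mu *: b) ->
    tM k y *m veronese_col k s t = 0.
  by move/plane => [_ cy]; apply: tM_veronese_ker.
exists (veronese_col k s t); split; first exact: veronese_col_neq0.
split; apply: on_cubic_plane; [exists 1, 0 | exists 0, 1];
  by rewrite scale1r scale0r ?addr0 ?add0r.
Qed.
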